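(* Let $S$ be a numerical semigroup with minimal generators $a_1<a_2<\cdots<a_\nu$, with embedding dimension $\nu=\nu(S)\ge10$. If $a_2>\frac{c(S)+\mu(S)}{3}$ and $$\mu(S)\le\frac{8}{25}\nu^2+\frac15\nu-\frac54,$$ then $S$ satisfies Wilf's conjecture, i.e. $\nu(S)|L(S)|\ge c(S)$.
   Context: A numerical semigroup is a submonoid $S\subseteq\mathbb{N}$ with finite complement. $\nu(S)$ is the number of minimal generators, $\mu(S)=a_1$ the multiplicity, $c(S)$ the conductor (least integer with $c(S)+\mathbb{N}\subseteq S$), and $L(S)=\{x\in S:0\le x<c(S)\}$. *)

From mathcomp Require Import all_boot.
Set Implicit Arguments. Unset Strict Implicit. Unset Printing Implicit Defensive.

Definition numerical_semigroup (S : pred nat) : Prop :=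
  [/\ 0 \in S,
      (forall x y, x \in S -> y \in S -> x + y \in S) &
      exists N, forall n, N <= n -> n \in S].

Definition minimal_generator (S : pred nat) (x : nat) : Prop :=
  [/\ x \in S, 0 < x &
      ~ (exists y z, [/\ y \in S, z \in S, 0 < y, 0 < z & x = y + z])].

Definition is_conductor (S : pred nat) (c : nat) : Prop :=
  (forall n, c <= n -> n \in S) /\
  (forall c', (forall n, c' <= n -> n \in S) -> c <= c').

Definition card_L (S : pred nat) (c : nat) : nat :=
  count (fun x => x \in S) (iota 0 c).

From mathcomp Require Import all_boot zify.

(* Let m = mu(S) and A = a_2, let w(r) be the Apery element of S in the class r
   mod m, and n(r) the number of elements of L(S) in that class, so that
   c <= n(r) m + w(r) < c + m and |L(S)| = sum_r n(r).  Besides r = 0, the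
   classes split into the nu - 1 classes whose Apery element is a generator and
   the p = m - nu classes P whose Apery element is not.  Because 3 A > c + m,
   each w(r), r in P, is a sum w(s) + w(t) of two generators lying below c; let
   K be the set of these k classes.  Each s in K occurs at most k + 1 times in
   such decompositions, whence 2 p <= k (k + 1), and summing
   2 c <= (n(s) + n(t)) m + w(r) over P, where the p distinct gaps
   c + m - n(r) m - w(r) add up to at least p (p + 1) / 2, gives
   p c <= m nu sum_K n as soon as 6 m p <= 2 m nu k + p (p + 1).  With
   c <= n(0) m this is c m <= m nu |L(S)|; the bound on mu makes the condition
   hold. *)

Lemma count_dvdn_iota d m : 0 < m -> d <= m * count (dvdn m) (iota 0 d) < d + m.
Proof.
move=> m_gt0; elim: d => [|d IHd]; first by rewrite muln0.
rewrite -addn1 iotaD count_cat /= addn0 add0n.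
move: IHd; set N := count _ _.
have [/dvdnP[t ->] | ndvd] := boolP (m %| d) => /andP[lo hi].
  rewrite [t * m]mulnC in lo hi *.
  have -> : N = t.
    apply/eqP; rewrite eqn_leq; apply/andP; split; last by rewrite -(leq_pmul2l m_gt0).
    by rewrite -ltnS -(ltn_pmul2l m_gt0) mulnS; lia.
  lia.
have : m * N != d by apply: contraNneq ndvd => <-; apply: dvdn_mulr.
lia.
Qed.

Lemma count_residue_iota m w c : 0 < m -> w < c + m ->
  c <= w + m * count (fun x => (w <= x) && (x == w %[mod m])) (iota 0 c) < c + m.
Proof.
move=> m_gt0 w_lt; have [w_le | c_lt] := leqP w c; last first.
  rewrite (eq_in_count (a2 := pred0)) ?count_pred0 ?muln0 ?addn0; first by lia.
  by move=> x; rewrite mem_iota add0n => /andP[_ x_lt] /=; rewrite leqNgt (ltn_trans x_lt c_lt).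
rewrite -(subnKC w_le) iotaD count_cat (eq_in_count (a2 := pred0)); last first.
  by move=> x; rewrite mem_iota add0n => /andP[_ x_lt] /=; rewrite leqNgt x_lt.
rewrite count_pred0 add0n -[w in iota w _]addn0 iotaDl count_map.
rewrite (eq_count (a2 := dvdn m)) => [|x /=]; last by rewrite leq_addr eqn_mod_dvd ?leq_addr ?addKn.
have := count_dvdn_iota (c - w) m m_gt0; lia.
Qed.

Lemma sorted_sumn_ge (t : seq nat) b : sorted ltn t -> all (leq b) t ->
  size t * (2 * b + size t) <= 2 * sumn t + size t.
Proof.
elim: t b => [|x t IHt] b //= t_sorted /andP[b_le_x _].
have := IHt x.+1 (path_sorted t_sorted) (order_path_min ltn_trans t_sorted).
nia.
Qed.

Lemma uniq_sumn_ge (s : seq nat) : uniq s -> all (leq 1) s ->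
  size s * (size s).+1 <= 2 * sumn s.
Proof.
move=> s_uniq s_pos; have s_perm : perm_eq (sort leq s) s by rewrite perm_sort.
have sorted_s : sorted ltn (sort leq s).
  by rewrite ltn_sorted_uniq_leq sort_uniq s_uniq sort_sorted //; exact: leq_total.
have := sorted_sumn_ge _ 1 sorted_s; rewrite size_sort (perm_sumn s_perm) (perm_all _ s_perm).
move=> /(_ s_pos); lia.
Qed.

Lemma multiplicity_arith nu p k : 10 <= nu ->
  100 * (nu + p) + 125 <= 32 * nu ^ 2 + 20 * nu -> 2 * p <= k * k.+1 ->
  6 * (nu + p) * p <= 2 * (nu + p) * nu * k + p * p.+1.
Proof.
move=> nu_ge mu_le p_le; have [-> | p_gt0] := posnP p; first by rewrite !muln0.
suff : 5 * p + nu <= 2 * nu * k + 1 by nia.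
have [k_small | k_large] := leqP (5 * k) (4 * nu - 8); last by nia.
case: k p_le k_small => [|k] p_le k_small; first by lia.
(* nia needs the product of the slacks k and 4 nu - 8 - 5 k.+1 as a hint. *)
have [v def_nu] : exists v, 4 * nu = v + 8 + 5 * k.+1.
  by exists (4 * nu - 8 - 5 * k.+1); lia.
have : 0 <= k * v by [].
nia.
Qed.

Section NumericalSemigroup.

Variable S : pred nat.
Hypothesis S0 : 0 \in S.
Hypothesis S_add : forall x y, x \in S -> y \in S -> x + y \in S.

Lemma mem_muln t y : y \in S -> t * y \in S.
Proof. by move=> yS; elim: t => [|t IHt] //; rewrite mulSn S_add. Qed.

Lemma exists_minimal_generator_le x : x \in S -> 0 < x ->
  exists g, [/\ minimal_generator S g, g <= x & x - g \in S].
Proof.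
elim/ltn_ind: x => x IHx xS x_gt0.
pose split_at y := [&& 0 < y, y \in S & x - y \in S].
have [/hasP[y] | x_indec] := boolP (has split_at (iota 0 x)).
  rewrite mem_iota add0n => /andP[_ y_lt_x] /and3P[y_gt0 yS xyS].
  have [g [g_gen g_le_y ygS]] := IHx y y_lt_x yS y_gt0.
  exists g; split => //; first exact: leq_trans g_le_y (ltnW y_lt_x).
  have -> : x - g = (y - g) + (x - y) by lia.
  exact: S_add.
exists x; split => //; last by rewrite subnn.
split => // -[y [z [yS zS y_gt0 z_gt0 def_x]]].
case/hasP: x_indec; exists y; first by rewrite mem_iota; lia.
by rewrite /split_at y_gt0 yS def_x addKn.
Qed.

Section Apery.

Variables m c : nat.
Hypothesis mS : m \in S.
Hypothesis m_gt0 : 0 < m.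
Hypothesis conductor : forall n, c <= n -> n \in S.

(* The class of [r] contains [r %% m + c * m < c.+1 * m], so the search range suffices. *)
Definition apery r := find (fun x => (x \in S) && (x == r %[mod m])) (iota 0 (c.+1 * m)).

Lemma aperyP r : [/\ apery r \in S, apery r = r %[mod m]
  & forall x, x \in S -> x = r %[mod m] -> apery r <= x].
Proof.
pose P x := (x \in S) && (x == r %[mod m]).
have P_has : has P (iota 0 (c.+1 * m)).
  apply/hasP; exists (r %% m + c * m).
    by rewrite mem_iota add0n mulSn ltn_add2r ltn_pmod.
  rewrite /P addnC modnMDl modn_mod eqxx andbT conductor //.
  exact: leq_trans (leq_pmulr c m_gt0) (leq_addr _ _).
have apery_lt : apery r < c.+1 * m by move: P_has; rewrite has_find size_iota.
have /andP[aS /eqP a_mod] := nth_find 0 P_has.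
rewrite nth_iota // add0n in aS a_mod.
split=> // x xS x_mod; rewrite leqNgt; apply/negP => x_lt.
have := before_find 0 x_lt; rewrite nth_iota ?(ltn_trans x_lt) // add0n.
by rewrite /P xS x_mod eqxx.
Qed.

Lemma mem_apery r : apery r \in S.
Proof. by case: (aperyP r). Qed.

Lemma apery_eqmod r : apery r = r %[mod m].
Proof. by case: (aperyP r). Qed.

Lemma apery_min r x : x \in S -> x = r %[mod m] -> apery r <= x.
Proof. by case: (aperyP r) => _ _; apply. Qed.

Lemma apery_eq r x : x \in S -> x = r %[mod m] ->
  (forall y, y \in S -> y = r %[mod m] -> x <= y) -> apery r = x.
Proof.
move=> xS x_mod x_min; apply/eqP; rewrite eqn_leq apery_min //=.
exact: x_min (mem_apery r) (apery_eqmod r).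
Qed.

Lemma apery_congr r1 r2 : r1 = r2 %[mod m] -> apery r1 = apery r2.
Proof.
move=> r12; apply: apery_eq; rewrite ?mem_apery ?apery_eqmod // => y yS y_mod.
by apply: apery_min; rewrite // y_mod.
Qed.

Lemma apery0 : apery 0 = 0.
Proof. by apply/eqP; rewrite -leqn0 apery_min. Qed.

Lemma apery_lt r : apery r < c + m.
Proof.
rewrite ltnNge; apply/negP => a_ge.
have m_le : m <= apery r by rewrite (leq_trans (leq_addl c m)).
have am_S : apery r - m \in S by rewrite conductor // leq_subRL // addnC.
have am_mod : apery r - m = r %[mod m].
  by rewrite -(apery_eqmod r) -[in RHS](subnK m_le) modnDr.
have := apery_min r _ am_S am_mod.
by rewrite leqNgt ltn_subrL m_gt0 (leq_trans m_gt0 m_le).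
Qed.

Lemma apery_ord_inj : injective (fun r : 'I_m => apery r).
Proof.
move=> r1 r2 /(congr1 (modn^~ m)); rewrite !apery_eqmod !modn_small //.
exact: val_inj.
Qed.

Lemma apery_subn x y : apery x = x -> y \in S -> y <= x -> x - y \in S ->
  apery (x - y) = x - y.
Proof.
move=> x_apery yS y_le xyS; apply: apery_eq => // z zS z_mod.
rewrite leq_subLR addnC -{1}x_apery apery_min ?S_add //.
by rewrite -modnDml z_mod modnDml subnK.
Qed.

Lemma minimal_generator_apery g : minimal_generator S g -> g != m -> apery g = g.
Proof.
move=> [gS g_gt0 g_indec] g_neq_m; apply: apery_eq => // y yS y_mod.
rewrite leqNgt; apply/negP => y_lt_g.
have /dvdnP[t def_t] : m %| g - y by rewrite -eqn_mod_dvd ?(ltnW y_lt_g) // y_mod.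
have def_g : g = y + t * m by rewrite -def_t subnKC ?(ltnW y_lt_g).
apply: g_indec; have [y0 | y_gt0] := posnP y; last first.
  by exists y, (t * m); split; rewrite ?mem_muln //; lia.
move: def_g g_neq_m; rewrite y0 add0n {def_t}; case: t => [|[|t]] def_g; first by lia.
  by rewrite def_g mul1n eqxx.
by exists m, (t.+1 * m); split; rewrite ?mem_muln //; lia.
Qed.

Lemma apery_sub_generator x : apery x = x -> 0 < x ->
  exists g, [/\ minimal_generator S g, g != m, g <= x & apery (x - g) = x - g].
Proof.
move=> x_apery x_gt0; have xS : x \in S by rewrite -x_apery mem_apery.
have [g [g_gen g_le xgS]] := exists_minimal_generator_le x xS x_gt0.
have [gS _ _] := g_gen.
exists g; split; rewrite ?apery_subn //; apply/eqP => g_eq_m.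
move: g_le xgS; rewrite g_eq_m => m_le xmS.
have xm_mod : x - m = x %[mod m] by rewrite -[in RHS](subnK m_le) modnDr.
have := apery_min x _ xmS xm_mod.
by rewrite x_apery leqNgt ltn_subrL m_gt0 x_gt0.
Qed.

Definition class_count r := count (fun x => (x \in S) && (x == r %[mod m])) (iota 0 c).

Lemma class_count_bounds r : c <= class_count r * m + apery r < c + m.
Proof.
have -> : class_count r =
    count (fun x => (apery r <= x) && (x == apery r %[mod m])) (iota 0 c).
  apply: eq_count => x /=; rewrite apery_eqmod.
  apply/andP/andP => [[xS x_mod] | [a_le x_mod]].
    by split; rewrite ?apery_min ?(eqP x_mod).
  split=> //; have /dvdnP[t def_t] : m %| x - apery r by rewrite -eqn_mod_dvd ?apery_eqmod.
  by rewrite -(subnKC a_le) def_t S_add ?mem_muln ?mem_apery.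
by rewrite addnC mulnC count_residue_iota ?apery_lt.
Qed.

Lemma card_L_sum : card_L S c = \sum_(r < m) class_count r.
Proof.
rewrite /card_L /class_count; elim: (iota 0 c) => [|x s IHs] /=.
  by rewrite big1.
rewrite IHs big_split /=; congr (_ + _).
have [xS | xNS] := boolP (x \in S); last by rewrite big1.
rewrite (bigD1 (Ordinal (ltn_pmod x m_gt0))) //= modn_mod eqxx big1 // => r.
by move=> /eqP r_neq; case: eqP => // x_r; case: r_neq; apply: val_inj; rewrite /= x_r modn_small.
Qed.

Section Wilf.

Variables (A : nat) (gens : seq nat).
Local Notation a := [:: m, A & gens].
Hypothesis gens_sorted : sorted ltn a.
Hypothesis minimal_generatorP : forall x, minimal_generator S x <-> x \in a.
Hypothesis A_large : c + m < 3 * A.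

Local Notation class0 := (Ordinal m_gt0).

Lemma generator_gt0 g : g \in a -> 0 < g.
Proof. by case/minimal_generatorP. Qed.

Lemma m_lt_A : m < A.
Proof. by case/andP: gens_sorted. Qed.

Lemma generator_ge_A g : g \in a -> g != m -> A <= g.
Proof.
case/andP: gens_sorted => _ /(order_path_min ltn_trans)/allP A_lt.
by rewrite !inE => /or3P[/eqP-> | /eqP-> | /A_lt/ltnW]; rewrite ?eqxx.
Qed.

Lemma apery_generator g : g \in a -> g != m -> apery (g %% m) = g.
Proof.
move=> g_gen g_neq_m; rewrite (apery_congr (g %% m) g) ?modn_mod //.
by apply: minimal_generator_apery => //; apply/minimal_generatorP.
Qed.

Definition gen_classes := [set r : 'I_m | apery r \in a].
Definition low_gen_classes := [set r : 'I_m | (apery r \in a) && (apery r < c)].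
Definition sum_classes := [set r : 'I_m | (0 < r) && (apery r \notin a)].

Lemma card_gen_classes : #|gen_classes| = (size gens).+1.
Proof.
have /andP[m_notin gens_uniq] : uniq a := sorted_uniq ltn_trans ltnn gens_sorted.
rewrite cardE -(size_map (fun r : 'I_m => apery r)); apply: (@perm_size _ _ (A :: gens)).
apply: uniq_perm => //; first by rewrite map_inj_uniq ?enum_uniq //; exact: apery_ord_inj.
move=> x; apply/mapP/idP => [[r] | x_in].
  rewrite mem_enum in_set => /[swap] ->; rewrite in_cons => /orP[/eqP r_m | //].
  have r0 : r = 0 :> nat by rewrite -(modn_small (ltn_ord r)) -apery_eqmod r_m modnn.
  by move: r_m (generator_gt0 m (mem_head _ _)); rewrite r0 apery0 => <-.
have x_gen : x \in a by rewrite in_cons x_in orbT.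
have x_neq_m : x != m by apply: contraNneq m_notin => <-.
exists (Ordinal (ltn_pmod x m_gt0)); last by rewrite /= apery_generator.
by rewrite mem_enum in_set /= apery_generator.
Qed.

Lemma setC_sum_classes : ~: sum_classes = class0 |: gen_classes.
Proof.
by apply/setP => r; rewrite in_setU1 !in_set negb_and negbK -leqNgt leqn0 -val_eqE.
Qed.

Lemma class0_notin_gen_classes : class0 \notin gen_classes.
Proof. by rewrite in_set /= apery0; apply/negP => /generator_gt0. Qed.

Lemma low_gen_classes_sub : low_gen_classes \subset gen_classes.
Proof. by apply/subsetP => r; rewrite !in_set => /andP[]. Qed.

Lemma multiplicity_eq : m = size a + #|sum_classes|.
Proof.
rewrite -[LHS]card_ord -(cardsC sum_classes) setC_sum_classes cardsU1.
by rewrite class0_notin_gen_classes card_gen_classes /= addnC.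
Qed.

Lemma sum_class_generators r : r \in sum_classes ->
  exists y z, [/\ y \in a, z \in a, y != m, z != m & apery r = y + z].
Proof.
rewrite in_set => /andP[r_gt0 r_notgen].
have r_apery : apery (apery r) = apery r by apply: apery_congr; rewrite apery_eqmod.
have ar_gt0 : 0 < apery r.
  rewrite lt0n; apply: contraTneq r_gt0 => ar0.
  by rewrite -leqNgt leqn0 -(modn_small (ltn_ord r)) -(apery_eqmod r) ar0 mod0n.
have [g1 [/minimal_generatorP g1_gen g1_m g1_le ap1]] :=
  apery_sub_generator _ r_apery ar_gt0.
have [x1_0 | x1_gt0] := posnP (apery r - g1).
  have ar_g1 : apery r = g1 by lia.
  by move: r_notgen; rewrite ar_g1 g1_gen.
have [g2 [/minimal_generatorP g2_gen g2_m g2_le ap2]] :=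
  apery_sub_generator _ ap1 x1_gt0.
have [x2_0 | x2_gt0] := posnP (apery r - g1 - g2).
  by exists g1, g2; split => //; lia.
have [g3 [/minimal_generatorP g3_gen g3_m g3_le _]] :=
  apery_sub_generator _ ap2 x2_gt0.
(* A third generator would give apery r >= 3 A > c + m. *)
have := apery_lt r; have := generator_ge_A g1 g1_gen g1_m.
have := generator_ge_A g2 g2_gen g2_m; have := generator_ge_A g3 g3_gen g3_m.
lia.
Qed.

Definition summands (r : 'I_m) (st : 'I_m * 'I_m) :=
  [&& st.1 \in low_gen_classes, st.2 \in low_gen_classes, apery st.1 <= apery st.2
    & apery st.1 + apery st.2 == apery r].

Lemma exists_summands r : r \in sum_classes -> exists st, summands r st.
Proof.
move=> /sum_class_generators[y [z [y_gen z_gen y_m z_m ar_eq]]].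
wlog y_le_z : y z y_gen z_gen y_m z_m ar_eq / y <= z.
  move=> wlog_yz; have [|z_lt_y] := leqP y z; first exact: wlog_yz.
  by apply: (wlog_yz z y) => //; rewrite 1?addnC // ltnW.
exists (Ordinal (ltn_pmod y m_gt0), Ordinal (ltn_pmod z m_gt0)).
rewrite /summands !in_set /= !apery_generator // y_gen z_gen ar_eq y_le_z eqxx /= andbT.
have := apery_lt r; have := generator_ge_A y y_gen y_m.
have := generator_ge_A z z_gen z_m; have := m_lt_A.
by move=> *; apply/andP; split; lia.
Qed.

Definition split_class r := odflt (r, r) [pick st | summands r st].
Local Notation lo r := (split_class r).1.
Local Notation hi r := (split_class r).2.

Lemma split_classP r : r \in sum_classes ->
  [/\ lo r \in low_gen_classes, hi r \in low_gen_classes, apery (lo r) <= apery (hi r)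
    & apery r = apery (lo r) + apery (hi r)].
Proof.
move=> r_sum; rewrite /split_class; case: pickP => [st | no_st] /=.
  by case/and4P => ? ? ? /eqP.
by have [st] := exists_summands r r_sum; rewrite no_st.
Qed.

Definition split_degree s :=
  #|[set r in sum_classes | lo r == s]| + #|[set r in sum_classes | hi r == s]|.

Lemma card_split_fiber_le (f g : 'I_m -> 'I_m) (B : {set 'I_m}) s :
  (forall r, r \in sum_classes -> apery r = apery (f r) + apery (g r)) ->
  (forall r, r \in sum_classes -> f r = s -> g r \in B) ->
  #|[set r in sum_classes | f r == s]| <= #|B|.
Proof.
move=> fg_sum fg_B.
have g_inj : {in [set r in sum_classes | f r == s] &, injective g}.
  move=> r1 r2 /setIdP[r1_sum /eqP f1] /setIdP[r2_sum /eqP f2] g12.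
  by apply: apery_ord_inj; rewrite /= (fg_sum r1 r1_sum) (fg_sum r2 r2_sum) f1 f2 g12.
rewrite -(card_in_imset g_inj); apply/subset_leq_card/subsetP => x /imsetP[r].
by case/setIdP => r_sum /eqP fr ->; exact: fg_B.
Qed.

Lemma split_degree_le s : s \in low_gen_classes -> split_degree s <= #|low_gen_classes|.+1.
Proof.
move=> sK.
have lo_le : #|[set r in sum_classes | lo r == s]| <=
    #|[set u in low_gen_classes | apery s <= apery u]|.
  apply: (card_split_fiber_le (fun r => lo r) (fun r => hi r)) => r r_sum;
    have [_ hiK le_lh ar_eq] := split_classP r r_sum => //.
  by move=> lo_s; rewrite in_set hiK -lo_s le_lh.
have hi_le : #|[set r in sum_classes | hi r == s]| <=
    #|[set u in low_gen_classes | apery u <= apery s]|.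
  apply: (card_split_fiber_le (fun r => hi r) (fun r => lo r)) => r r_sum;
    have [loK _ le_lh ar_eq] := split_classP r r_sum; first by rewrite addnC.
  by move=> hi_s; rewrite in_set loK -hi_s le_lh.
apply: leq_trans (leq_add lo_le hi_le) _; rewrite -cardsUI -addn1 leq_add //.
  by apply/subset_leq_card/subsetP => u; rewrite in_setU !in_set -andb_orr => /andP[].
rewrite -(cards1 s); apply/subset_leq_card/subsetP => u.
rewrite in_setI !in_set => /andP[/andP[_ su] /andP[_ us]].
by rewrite in_set1; apply/eqP/apery_ord_inj/eqP; rewrite eqn_leq us su.
Qed.

Lemma sum_split_class (F : 'I_m -> nat) :
  \sum_(r in sum_classes) (F (lo r) + F (hi r)) =
  \sum_(s in low_gen_classes) split_degree s * F s.
Proof.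
have fiber_sum (f : 'I_m -> 'I_m) :
    (forall r, r \in sum_classes -> f r \in low_gen_classes) ->
    \sum_(r in sum_classes) F (f r) =
    \sum_(s in low_gen_classes) #|[set r in sum_classes | f r == s]| * F s.
  move=> fK; rewrite (partition_big f (mem low_gen_classes)) //.
  apply: eq_bigr => s _; rewrite -sum_nat_cond_const.
  by apply: eq_bigr => r /andP[_ /eqP->].
rewrite big_split /= !fiber_sum => [|r /split_classP[] //|r /split_classP[] //].
by rewrite -big_split; apply: eq_bigr => s _; rewrite mulnDl.
Qed.

Lemma sum_split_degree : \sum_(s in low_gen_classes) split_degree s = 2 * #|sum_classes|.
Proof.
transitivity (\sum_(s in low_gen_classes) split_degree s * 1).
  by apply: eq_bigr => s _; rewrite muln1.
by rewrite -sum_split_class sum_nat_const mulnC.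
Qed.

Lemma card_sum_classes_le_pairs :
  2 * #|sum_classes| <= #|low_gen_classes| * #|low_gen_classes|.+1.
Proof. by rewrite -sum_split_degree -sum_nat_const; exact: leq_sum split_degree_le. Qed.

Local Notation top r := (class_count r * m + apery r).

Lemma class_count_gt0 s : s \in low_gen_classes -> 0 < class_count s.
Proof.
rewrite in_set => /andP[_ s_lt]; have /andP[c_le _] := class_count_bounds s.
by rewrite lt0n; apply: contraTneq c_le => ->; rewrite -ltnNge.
Qed.

Lemma card_low_gen_classes_lt : #|low_gen_classes| < size a.
Proof. by rewrite /= ltnS -card_gen_classes subset_leq_card ?low_gen_classes_sub. Qed.

Lemma sum_split_degree_count :
  \sum_(s in low_gen_classes) split_degree s * class_count s + size a * #|low_gen_classes| <=
  size a * \sum_(s in low_gen_classes) class_count s + 2 * #|sum_classes|.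
Proof.
rewrite -sum_split_degree mulnC -sum_nat_const big_distrr -!big_split /=.
(* termwise, (size a - split_degree s) * (class_count s - 1) >= 0 *)
apply: leq_sum => s sK; have := split_degree_le s sK.
have := class_count_gt0 s sK; have := card_low_gen_classes_lt; rewrite /=; nia.
Qed.

Lemma sum_classes_top_ge :
  #|sum_classes| * (2 * c) + m * \sum_(r in sum_classes) class_count r <=
  \sum_(r in sum_classes) top r + m * \sum_(s in low_gen_classes) split_degree s * class_count s.
Proof.
rewrite -sum_split_class -sum_nat_const !big_distrr -!big_split /=; apply: leq_sum => r r_sum.
have [loK hiK _ ar_eq] := split_classP r r_sum.
have /andP[lo_top _] := class_count_bounds (lo r).
have /andP[hi_top _] := class_count_bounds (hi r).
nia.
Qed.

Lemma sum_classes_top_le :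
  2 * \sum_(r in sum_classes) top r + #|sum_classes| * #|sum_classes|.+1 <=
  2 * (#|sum_classes| * (c + m)).
Proof.
pose gap (r : 'I_m) := c + m - top r.
have top_lt r : top r < c + m by case/andP: (class_count_bounds r).
have gap_uniq : uniq (map gap (enum sum_classes)).
  rewrite map_inj_in_uniq ?enum_uniq // => r1 r2 _ _ gap12.
  have top12 : top r1 = top r2.
    by have := top_lt r1; have := top_lt r2; rewrite /gap in gap12; lia.
  apply: val_inj; rewrite /= -(modn_small (ltn_ord r1)) -(modn_small (ltn_ord r2)).
  by rewrite -(apery_eqmod r1) -(apery_eqmod r2) -(modnMDl (class_count r1)) top12 modnMDl.
have gap_pos : all (leq 1) (map gap (enum sum_classes)).
  by apply/allP => _ /mapP[r _ ->]; rewrite subn_gt0.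
have gap_sum : #|sum_classes| * #|sum_classes|.+1 <= 2 * \sum_(r in sum_classes) gap r.
  by have := uniq_sumn_ge _ gap_uniq gap_pos; rewrite size_map -cardE sumnE big_map big_enum.
have gap_top : \sum_(r in sum_classes) gap r + \sum_(r in sum_classes) top r =
    #|sum_classes| * (c + m).
  by rewrite -big_split -sum_nat_const; apply: eq_bigr => r _; exact: subnK (ltnW (top_lt r)).
lia.
Qed.

Lemma card_L_ge : class_count class0 + \sum_(s in low_gen_classes) class_count s +
  \sum_(r in sum_classes) class_count r <= card_L S c.
Proof.
have sum_compl : \sum_(r < m) class_count r =
    \sum_(r in sum_classes) class_count r + \sum_(r in ~: sum_classes) class_count r.
  by rewrite (bigID (mem sum_classes)) /=; congr (_ + _); apply: eq_bigl => r; rewrite ?in_setC.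
have K_le_G :
    \sum_(s in low_gen_classes) class_count s <= \sum_(r in gen_classes) class_count r.
  rewrite [X in _ <= X](big_setID low_gen_classes) (setIidPr low_gen_classes_sub).
  exact: leq_addr.
rewrite card_L_sum sum_compl setC_sum_classes big_setU1 ?class0_notin_gen_classes //=.
by rewrite [X in _ <= X]addnC leq_add2r leq_add2l.
Qed.

Lemma wilf_of_bound :
  6 * m * #|sum_classes| <=
    2 * m * size a * #|low_gen_classes| + #|sum_classes| * #|sum_classes|.+1 ->
  c <= size a * card_L S c.
Proof.
move=> bound; have m_eq := multiplicity_eq; have L_ge := card_L_ge.
have top_ge := sum_classes_top_ge; have top_le := sum_classes_top_le.
have deg_count := sum_split_degree_count.
have c_le : c <= class_count class0 * m.
  by have /andP[] := class_count_bounds class0; rewrite /= apery0 addn0.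
set p := #|sum_classes| in m_eq bound top_ge top_le deg_count.
set k := #|low_gen_classes| in bound deg_count.
set X := \sum_(s in low_gen_classes) class_count s in L_ge deg_count.
set Z := \sum_(s in low_gen_classes) split_degree s * class_count s in top_ge deg_count.
have mZ : m * (Z + size a * k) <= m * (size a * X + 2 * p).
  by rewrite leq_mul2l deg_count orbT.
have pc_le : p * c <= m * (size a * X) by nia.
rewrite -(leq_pmul2r m_gt0); nia.
Qed.

Lemma wilf_of_small_multiplicity : 10 <= size a ->
  100 * m + 125 <= 32 * size a ^ 2 + 20 * size a -> c <= size a * card_L S c.
Proof.
move=> nu_ge mu_le; apply: wilf_of_bound.
rewrite [in X in X <= _]multiplicity_eq in mu_le.
have := multiplicity_arith _ _ _ nu_ge mu_le card_sum_classes_le_pairs.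
by rewrite -multiplicity_eq.
Qed.

End Wilf.

End Apery.

End NumericalSemigroup.

Theorem proposition4p6 (S : pred nat) (a : seq nat) (c : nat) :
  numerical_semigroup S ->
  sorted ltn a ->
  (forall x, minimal_generator S x <-> x \in a) ->
  is_conductor S c ->
  10 <= size a ->
  c + nth 0 a 0 < 3 * nth 0 a 1 ->
  100 * nth 0 a 0 + 125 <= 32 * (size a) ^ 2 + 20 * size a ->
  c <= size a * card_L S c.
Proof.
move=> [S0 S_add _] + + [conductor _].
case: a => [|m [|A gens]] // a_sorted genP nu_ge A_large mu_le.
have [mS m_gt0 _] := proj2 (genP m) (mem_head _ _).
by apply: wilf_of_small_multiplicity.
Qed.
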